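(* Let $d\ge 1$, $N\ge 1$, $L\ge 0$ be integers and let $\epsilon>0$, $\alpha>0$, $\sigma>0$, $c\ge 0$ be real numbers. Fix a state $s$ and let $R(s,\cdot):\mathbb{R}^d\to\mathbb{R}$ be differentiable and $c$-Lipschitz with respect to the Euclidean norm, so that $\|\nabla_a R(s,a)\|_2\le c$ for all $a\in\mathbb{R}^d$. Let $k(x,y)=\exp\!\big(-\|x-y\|_2^2/(2\sigma^2)\big)$ be the Gaussian (RBF) kernel on $\mathbb{R}^d$. Let $a_1^{(0)},\dots,a_N^{(0)}\in\mathbb{R}^d$ be arbitrary initial particles (e.g. samples from a reference policy $\mu(\cdot\mid s)$), and define iteratively, for $l=0,1,\dots,L-1$ and $i=1,\dots,N$, $$a_i^{(l+1)} = a_i^{(l)} + \epsilon\,\phi_l\big(a_i^{(l)}\big),\qquad \phi_l(x)=\frac1N\sum_{j=1}^N\Big[k\big(a_j^{(l)},x\big)\,\frac{\nabla_a R\big(s,a_j^{(l)}\big)}{\alpha}+\nabla_{a_j}k\big(a_j^{(l)},x\big)\Big],$$ where $\nabla_{a_j}k(a_j,x)$ denotes the gradient of $k$ with respect to its first argument evaluated at $a_j=a_j^{(l)}$. Let $\pi_N^0=\frac1N\sum_{i=1}^N\delta_{a_i^{(0)}}$ and $\pi_N^L=\frac1N\sum_{i=1}^N\delta_{a_i^{(L)}}$. Then $$\mathrm{MMD}^2\big(\pi_N^0,\pi_N^L\big)\le \frac{2\epsilon L}{\sigma\sqrt e}\left(\frac{c}{\alpha}+\frac{1}{\sigma\sqrt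 e}\right).$$
   Context: For probability measures $P,Q$ on $\mathbb{R}^d$, the squared maximum mean discrepancy with kernel $k$ is $\mathrm{MMD}^2(P,Q)=\mathbb{E}_{x,x'\sim P}k(x,x')+\mathbb{E}_{y,y'\sim Q}k(y,y')-2\,\mathbb{E}_{x\sim P,y\sim Q}k(x,y)$ (with independent draws). For the empirical measures above this equals $\frac{1}{N^2}\sum_{i,j=1}^N\big[k(a_i^{(0)},a_j^{(0)})+k(a_i^{(L)},a_j^{(L)})-2k(a_i^{(0)},a_j^{(L)})\big]$. The kernel bandwidth $\sigma$ is a fixed constant (the same in every iteration). In the paper, $\pi_N^0$ is identified with the reference distribution $\mu$, and $\pi_N^L$ is the ''implicit policy'' obtained by running $L$ steps of the particle update (Value Gradient Flow). *)

From mathcomp Require Import all_boot all_order all_algebra.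
From mathcomp Require Import all_classical all_reals all_analysis.
Set Implicit Arguments. Unset Strict Implicit. Unset Printing Implicit Defensive.
Import Order.TTheory GRing.Theory Num.Theory.
Import numFieldNormedType.Exports.
Local Open Scope ring_scope.

Section Defs.
Variable R : realType.
Variable d : nat.

Definition enorm (v : 'rV[R]_d) : R := Num.sqrt (\sum_(i < d) (v 0 i) ^+ 2).

Definition rbf (sigma : R) (x y : 'rV[R]_d) : R :=
  expR (- (enorm (x - y)) ^+ 2 / (2 * sigma ^+ 2)).

Definition grad (f : 'rV[R]_d -> R) (a : 'rV[R]_d) : 'rV[R]_d :=
  \row_(i < d) ('D_(delta_mx 0 i) f a).

Definition phi (N : nat) (Rs : 'rV[R]_d -> R) (alpha sigma : R)
  (p : 'I_N -> 'rV[R]_d) (x : 'rV[R]_d) : 'rV[R]_d :=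
  N%:R^-1 *: \sum_(j < N)
     ((rbf sigma (p j) x / alpha) *: grad Rs (p j)
      + grad (fun y => rbf sigma y x) (p j)).

Fixpoint particles (N : nat) (Rs : 'rV[R]_d -> R) (alpha sigma eps : R)
  (a0 : 'I_N -> 'rV[R]_d) (l : nat) : 'I_N -> 'rV[R]_d :=
  match l with
  | 0%N => a0
  | l'.+1 => let p := particles Rs alpha sigma eps a0 l' in
             fun i => p i + eps *: phi Rs alpha sigma p (p i)
  end.

(* squared MMD between empirical measures (1/N) sum delta_{p i}, (1/N) sum delta_{q i} *)
Definition MMD2 (N : nat) (sigma : R) (p q : 'I_N -> 'rV[R]_d) : R :=
  (N%:R ^+ 2)^-1 * \sum_(i < N) \sum_(j < N)
     (rbf sigma (p i) (p j) + rbf sigma (q i) (q j) - 2 * rbf sigma (p i) (q j)).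

End Defs.

From mathcomp Require Import all_boot all_order all_algebra.
From mathcomp Require Import all_classical all_reals all_analysis.
From mathcomp Require Import ring lra.
Import Order.TTheory GRing.Theory Num.Theory.
Import numFieldNormedType.Exports.
Local Open Scope ring_scope.
Set Implicit Arguments. Unset Strict Implicit. Unset Printing Implicit Defensive.

(** The kernel is a function of the distance: [k(x, y) = g(|x - y|)] with
  [g(t) = exp(-t^2 / (2 sigma^2))], and [|g'|] attains its maximum
  [kappa = 1 / (sigma sqrt e)] at [t = sigma].  Hence [k] is [kappa]-Lipschitz
  in each argument, [|grad_1 k| <= kappa], and, as [k <= 1] and
  [|grad R| <= c], the driving field satisfies [|phi_l| <= c / alpha + kappa].
  After [L] steps every particle is therefore within [delta = eps L (c/alpha + kappa)]
  of its starting point.  Writing [a_i, b_i] for the initial and final particles,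
  each summand of the MMD splits as
  [(k(a_i,a_j) - k(a_i,b_j)) + (k(b_i,b_j) - k(a_i,b_j)) <= 2 kappa delta]. *)

Section CauchySchwarz.
Variables (R : realFieldType) (I : finType).

Lemma cauchy_schwarz_sum (a b : I -> R) :
  (\sum_i a i * b i) ^+ 2 <= (\sum_i a i ^+ 2) * (\sum_i b i ^+ 2).
Proof.
set U := \sum_i a i ^+ 2; set V := \sum_i b i ^+ 2; set P := \sum_i a i * b i.
have U_ge0 : 0 <= U by apply: sumr_ge0 => i _; exact: sqr_ge0.
have discr_ge0 : 0 <= U * (U * V - P ^+ 2).
  have -> : U * (U * V - P ^+ 2) = \sum_i (U * b i - P * a i) ^+ 2.
    rewrite (eq_bigr (fun i =>
      U ^+ 2 * b i ^+ 2 - 2 * U * P * (a i * b i) + P ^+ 2 * a i ^+ 2)).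
      by rewrite big_split sumrB /= -!mulr_sumr -/U -/V -/P; ring.
    by move=> i _; ring.
  by apply: sumr_ge0 => i _; exact: sqr_ge0.
have [U_gt0 | U_le0] := ltP 0 U.
  by rewrite -subr_ge0 -(pmulr_rge0 _ U_gt0).
have U_eq0 : U = 0 by apply/eqP; rewrite eq_le U_le0 U_ge0.
have a0 i : a i = 0.
  apply/eqP; rewrite -sqrf_eq0; apply/eqP.
  exact: (psumr_eq0P (fun i _ => sqr_ge0 (a i)) U_eq0).
rewrite /P big1 => [|i _]; last by rewrite a0 mul0r.
by rewrite expr0n mulr_ge0 // sumr_ge0 // => i _; exact: sqr_ge0.
Qed.

End CauchySchwarz.

Section EuclideanNorm.
Variables (R : realType) (d : nat).
Implicit Types u v w : 'rV[R]_d.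

Lemma enorm_ge0 v : 0 <= enorm v.
Proof. exact: sqrtr_ge0. Qed.

Lemma enorm_sqr v : enorm v ^+ 2 = \sum_(k < d) v 0 k ^+ 2.
Proof. by rewrite /enorm sqr_sqrtr // sumr_ge0 // => k _; exact: sqr_ge0. Qed.

Lemma enormZ (a : R) v : enorm (a *: v) = `|a| * enorm v.
Proof.
rewrite /enorm (eq_bigr (fun k => a ^+ 2 * v 0 k ^+ 2)); last first.
  by move=> k _; rewrite mxE exprMn.
by rewrite -mulr_sumr sqrtrM ?sqr_ge0 // sqrtr_sqr.
Qed.

Lemma enorm0 : enorm (0 : 'rV[R]_d) = 0.
Proof. by rewrite -(scale0r (0 : 'rV[R]_d)) enormZ normr0 mul0r. Qed.

Lemma enorm_distC u v : enorm (u - v) = enorm (v - u).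
Proof. by rewrite -opprB -scaleN1r enormZ normrN normr1 mul1r. Qed.

Lemma sum_mul_le_enorm u v : \sum_(k < d) u 0 k * v 0 k <= enorm u * enorm v.
Proof.
apply: le_trans (ler_norm _) _.
rewrite -sqrtr_sqr /enorm -sqrtrM ?sumr_ge0 // => [|k _]; last exact: sqr_ge0.
by rewrite ler_sqrt ?mulr_ge0 ?sumr_ge0 ?cauchy_schwarz_sum // => k _; exact: sqr_ge0.
Qed.

Lemma enormD u v : enorm (u + v) <= enorm u + enorm v.
Proof.
rewrite -ler_sqr ?nnegrE ?addr_ge0 ?enorm_ge0 //.
have -> : enorm (u + v) ^+ 2 =
    enorm u ^+ 2 + 2 * \sum_(k < d) u 0 k * v 0 k + enorm v ^+ 2.
  rewrite !enorm_sqr mulr_sumr -!big_split /=.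
  by apply: eq_bigr => k _; rewrite mxE; ring.
have := sum_mul_le_enorm u v; nra.
Qed.

Lemma ler_enorm_dist u w : `|enorm u - enorm w| <= enorm (u - w).
Proof.
have := enormD (u - w) w; rewrite subrK => le_u.
have := enormD (w - u) u; rewrite subrK enorm_distC => le_w.
by rewrite ler_norml; apply/andP; split; lra.
Qed.

Lemma enorm_sum (I : finType) (F : I -> 'rV[R]_d) :
  enorm (\sum_i F i) <= \sum_i enorm (F i).
Proof.
elim/big_rec2: _ => [|i y1 y2 _ IH]; first by rewrite enorm0.
by apply: le_trans (enormD _ _) _; rewrite lerD2l.
Qed.

Lemma enorm_sqr_add_delta (i : 'I_d) (h : R) w :
  enorm (h *: delta_mx 0 i + w) ^+ 2 = enorm w ^+ 2 + 2 * w 0 i * h + h ^+ 2.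
Proof.
rewrite !enorm_sqr (eq_bigr (fun k =>
  w 0 k ^+ 2 + (i == k)%:R * (2 * w 0 k * h + h ^+ 2))); last first.
  by move=> k _; rewrite !mxE /= (eq_sym k i); case: (i == k) => /=; ring.
rewrite big_split /= -addrA; congr (_ + _).
rewrite (bigD1 i) //= eqxx mul1r big1 ?addr0 // => k ki.
by rewrite eq_sym (negbTE ki) mul0r.
Qed.

End EuclideanNorm.

Section GaussianProfile.
Variable R : realType.
Implicit Types s t : R.

Definition gauss s t : R := expR (- t ^+ 2 / (2 * s ^+ 2)).

Definition gauss_lip s : R := 1 / (s * Num.sqrt (expR 1)).

Lemma rbfE (d : nat) s (x y : 'rV[R]_d) : rbf s x y = gauss s (enorm (x - y)).
Proof. by []. Qed.

Lemma gauss_ge0 s t : 0 <= gauss s t.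
Proof. exact: expR_ge0. Qed.

Lemma gauss_le1 s t : gauss s t <= 1.
Proof. by rewrite /gauss expR_le1 mulNr oppr_le0 divr_ge0 ?sqr_ge0 // mulr_ge0 ?sqr_ge0. Qed.

Lemma gauss_lip_ge0 s : 0 < s -> 0 <= gauss_lip s.
Proof. by move=> s_gt0; rewrite divr_ge0 ?mulr_ge0 ?ltW ?sqrtr_ge0. Qed.

Lemma mulr_expRN_le t : t * expR (- t) <= expR (-1).
Proof.
have := expR_ge1Dx (t - 1); rewrite addrC subrK => le_t.
have -> : expR (-1) = expR (t - 1) * expR (- t) by rewrite -expRD; congr expR; ring.
by rewrite ler_pM2r ?expR_gt0.
Qed.

Lemma gauss_slope_le s t : 0 < s -> `|gauss s t * (t / s ^+ 2)| <= gauss_lip s.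
Proof.
(* After squaring this is [u exp(-u) <= exp(-1)] for [u = t^2 / s^2]. *)
move=> s_gt0; have s2_gt0 : 0 < s ^+ 2 by rewrite exprn_gt0.
rewrite -sqrtr_sqr -(ger0_norm (gauss_lip_ge0 s_gt0)) -sqrtr_sqr.
rewrite ler_sqrt ?sqr_ge0 //.
have -> : (gauss s t * (t / s ^+ 2)) ^+ 2 =
    t ^+ 2 / s ^+ 2 * expR (- (t ^+ 2 / s ^+ 2)) / s ^+ 2.
  rewrite /gauss exprMn expr2 -expRD.
  have -> : - t ^+ 2 / (2 * s ^+ 2) + - t ^+ 2 / (2 * s ^+ 2) = - (t ^+ 2 / s ^+ 2).
    by field; rewrite gt_eqF.
  by field; rewrite gt_eqF.
have -> : gauss_lip s ^+ 2 = expR (-1) / s ^+ 2.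
  rewrite /gauss_lip expRN mul1r exprVn exprMn sqr_sqrtr ?expR_ge0 //.
  by field; rewrite !gt_eqF ?expR_gt0.
by rewrite ler_pM2r ?invr_gt0 // mulr_expRN_le.
Qed.

Lemma is_derive_expR_quad (A B C t : R) :
  is_derive t 1 (fun t => expR (A + B * t + C * t ^+ 2))
    (expR (A + B * t + C * t ^+ 2) * (B + 2 * C * t)).
Proof.
by apply: is_derive_eq; rewrite add0r mul1r /GRing.scale /= !mulr1; congr (_ * _); ring.
Qed.

Lemma gauss_derive s t : 0 < s ->
  is_derive t 1 (gauss s) (- gauss s t * (t / s ^+ 2)).
Proof.
move=> s_gt0; have s_neq0 : s != 0 by rewrite gt_eqF.
have gaussE : gauss s = fun t => expR (0 + 0 * t + (- 1 / (2 * s ^+ 2)) * t ^+ 2).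
  by apply/funext => u; rewrite /gauss; congr expR; ring.
have := is_derive_expR_quad 0 0 (- 1 / (2 * s ^+ 2)) t.
rewrite -gaussE => /is_derive_eq; apply.
by rewrite gaussE; field.
Qed.

Lemma gauss_lipschitz s a b : 0 < s ->
  `|gauss s a - gauss s b| <= gauss_lip s * `|a - b|.
Proof.
move=> s_gt0.
wlog le_ab : a b / a <= b.
  move=> W; have [/W //|/ltW le_ba] := leP a b.
  by rewrite distrC (distrC a); apply: W.
have gauss_cont : continuous (gauss s).
  move=> r; apply/differentiable_continuous/derivable1_diffP.
  by have [] := gauss_derive r s_gt0.
have [t _ mvt] := MVT_segment le_ab (fun t _ => gauss_derive t s_gt0)
  (continuous_subspaceT gauss_cont).
by rewrite distrC mvt normrM (distrC b) ler_wpM2r // mulNr normrN gauss_slope_le.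
Qed.

End GaussianProfile.

Section KernelGradients.
Variables (R : realType) (d : nat).
Implicit Types (f : 'rV[R]_d -> R) (a p v x : 'rV[R]_d).

Lemma derive_norm_le (V : normedModType R) (f : V -> R) (a v : V) (M : R) :
  derivable f a v ->
  (forall h : R, h != 0 -> `|h^-1 * (f (h *: v + a) - f a)| <= M) ->
  `|'D_v f a| <= M.
Proof.
move=> df quot_le; apply: (cvgr_to_le (cvg_norm df)).
by near=> h; apply: quot_le; near: h; exact: nbhs_dnbhs_neq.
Unshelve. all: by end_near.
Qed.

Lemma derive_le_lipschitz f (c : R) a v :
  derivable f a v ->
  (forall a b, `|f a - f b| <= c * enorm (a - b)) ->
  `|'D_v f a| <= c * enorm v.
Proof.
move=> df f_lip; apply: derive_norm_le => // h h_neq0.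
have := f_lip (h *: v + a) a; rewrite addrK enormZ normrM normfV.
by rewrite ler_pdivrMl ?normr_gt0 // mulrCA.
Qed.

Lemma enorm_grad_le f (c : R) a :
  0 <= c -> differentiable f a ->
  (forall a b, `|f a - f b| <= c * enorm (a - b)) ->
  enorm (grad f a) <= c.
Proof.
move=> c_ge0 df f_lip; set g := grad f a.
(* Differentiating along the gradient itself gives [|g|^2 <= c |g|]. *)
have Dg : 'D_g f a = enorm g ^+ 2.
  rewrite deriveE // enorm_sqr.
  have -> : 'd f a g = 'd f a (\sum_(j < d) g 0 j *: delta_mx 0 j).
    by rewrite -row_sum_delta.
  rewrite linear_sum; apply: eq_bigr => j _.
  by rewrite linearZ /= -deriveE // /g mxE expr2.
have := derive_le_lipschitz (v := g) (diff_derivable df) f_lip.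
rewrite Dg ger0_norm ?sqr_ge0 // expr2.
have [->|g_neq0] := eqVneq (enorm g) 0; first by [].
by rewrite ler_pM2r // lt_def g_neq0 enorm_ge0.
Qed.

Lemma derive_along_line (V : normedModType R) (f : V -> R) (p v : V) :
  'D_v f p = 'D_1 (fun h : R => f (h *: v + p)) 0.
Proof.
rewrite /derive; congr lim; f_equal; apply/funext => h /=.
by rewrite addr0 scale0r add0r [_%:A]mulr1.
Qed.

Lemma grad_rbf (s : R) x p : 0 < s ->
  grad (fun y => rbf s y x) p =
    (- gauss s (enorm (p - x)) / s ^+ 2) *: (p - x).
Proof.
move=> s_gt0; have s_neq0 : s != 0 by rewrite gt_eqF.
apply/rowP => i; rewrite !mxE derive_along_line.
set w := p - x.
have -> : (fun h : R => rbf s (h *: delta_mx 0 i + p) x) = fun h =>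
    expR (- enorm w ^+ 2 / (2 * s ^+ 2) + (- w 0 i / s ^+ 2) * h
          + (- 1 / (2 * s ^+ 2)) * h ^+ 2).
  apply/funext => h; rewrite rbfE -addrA -/w /gauss enorm_sqr_add_delta.
  by congr expR; field.
have [_ ->] := is_derive_expR_quad (- enorm w ^+ 2 / (2 * s ^+ 2))
  (- w 0 i / s ^+ 2) (- 1 / (2 * s ^+ 2)) 0.
by rewrite /gauss !mulr0 expr0n /= mulr0 !addr0 /w !mxE; ring.
Qed.

Lemma enorm_grad_rbf_le (s : R) x p : 0 < s ->
  enorm (grad (fun y => rbf s y x) p) <= gauss_lip s.
Proof.
move=> s_gt0; rewrite grad_rbf // enormZ -[X in _ * X]ger0_norm ?enorm_ge0 //.
rewrite -normrM !mulNr normrN mulrAC -mulrA; exact: gauss_slope_le.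
Qed.

End KernelGradients.

Section ParticleFlow.
Variables (R : realType) (d : nat).

Lemma enorm_phi_le (N : nat) (Rs : 'rV[R]_d -> R) (alpha s c : R)
    (p : 'I_N -> 'rV[R]_d) (z : 'rV[R]_d) :
  (0 < N)%N -> 0 < alpha -> 0 < s ->
  (forall a, enorm (grad Rs a) <= c) ->
  enorm (phi Rs alpha s p z) <= c / alpha + gauss_lip s.
Proof.
move=> N_gt0 alpha_gt0 s_gt0 grad_le.
rewrite /phi enormZ normfV normr_nat ler_pdivrMl ?ltr0n //.
apply: le_trans (enorm_sum _) _.
rewrite mulr_natl -[in X in _ *+ X](card_ord N) -sumr_const.
apply: ler_sum => j _; apply: le_trans (enormD _ _) _.
apply: lerD; last exact: enorm_grad_rbf_le.
rewrite enormZ ger0_norm ?divr_ge0 ?gauss_ge0 ?(ltW alpha_gt0) // mulrAC.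
rewrite ler_wpM2r ?invr_ge0 ?(ltW alpha_gt0) //.
rewrite -[c]mul1r; apply: ler_pM.
- exact: gauss_ge0.
- exact: enorm_ge0.
- exact: gauss_le1.
- exact: grad_le.
Qed.

Lemma particles_displacement_le (N : nat) (Rs : 'rV[R]_d -> R)
    (alpha s eps M : R) (a0 : 'I_N -> 'rV[R]_d) :
  0 <= eps ->
  (forall (p : 'I_N -> 'rV[R]_d) z, enorm (phi Rs alpha s p z) <= M) ->
  forall l i, enorm (particles Rs alpha s eps a0 l i - a0 i) <= eps * l%:R * M.
Proof.
move=> eps_ge0 phi_le; elim=> [|l IH] i /=.
  by rewrite subrr enorm0 mulr0 mul0r.
rewrite addrAC; apply: le_trans (enormD _ _) _.
rewrite enormZ ger0_norm // -natr1 mulrDr mulr1 mulrDl.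
by rewrite lerD ?IH ?ler_wpM2l.
Qed.

Lemma rbf_lipschitz (s : R) (x y x' y' : 'rV[R]_d) : 0 < s ->
  `|rbf s x y - rbf s x' y'| <= gauss_lip s * enorm ((x - y) - (x' - y')).
Proof.
move=> s_gt0; apply: le_trans (gauss_lipschitz _ _ s_gt0) _.
by rewrite ler_wpM2l ?gauss_lip_ge0 // ler_enorm_dist.
Qed.

Lemma MMD2_le_displacement (N : nat) (s delta : R) (p q : 'I_N -> 'rV[R]_d) :
  (0 < N)%N -> 0 < s ->
  (forall i, enorm (q i - p i) <= delta) ->
  MMD2 s p q <= 2 * (gauss_lip s * delta).
Proof.
move=> N_gt0 s_gt0 disp_le.
have kappa_ge0 := gauss_lip_ge0 s_gt0.
have term_le i j : rbf s (p i) (p j) + rbf s (q i) (q j) - 2 * rbf s (p i) (q j)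
    <= 2 * (gauss_lip s * delta).
  have le_j : `|rbf s (p i) (p j) - rbf s (p i) (q j)| <= gauss_lip s * delta.
    apply: le_trans (rbf_lipschitz _ _ _ _ s_gt0) _.
    by rewrite opprB addrC addrA subrK ler_wpM2l.
  have le_i : `|rbf s (q i) (q j) - rbf s (p i) (q j)| <= gauss_lip s * delta.
    apply: le_trans (rbf_lipschitz _ _ _ _ s_gt0) _.
    by rewrite opprB addrA subrK ler_wpM2l.
  move: le_i le_j; rewrite !ler_norml => /andP[_ ?] /andP[_ ?]; lra.
rewrite /MMD2 ler_pdivrMl ?exprn_gt0 ?ltr0n //.
have -> : N%:R ^+ 2 * (2 * (gauss_lip s * delta)) =
    \sum_(i < N) \sum_(j < N) 2 * (gauss_lip s * delta).
  by rewrite !sumr_const !card_ord -mulrnA -[_ *+ (N * N)]mulr_natl natrM expr2.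
by apply: ler_sum => i _; apply: ler_sum => j _; exact: term_le.
Qed.

End ParticleFlow.

Unset Implicit Arguments. Set Strict Implicit.

Theorem theorem1 (R : realType) (d N L : nat) (eps alpha sigma c : R)
  (Rs : 'rV[R]_d -> R) (a0 : 'I_N -> 'rV[R]_d) :
  (1 <= d)%N -> (1 <= N)%N ->
  0 < eps -> 0 < alpha -> 0 < sigma -> 0 <= c ->
  (forall a : 'rV[R]_d, differentiable Rs a) ->
  (forall a b : 'rV[R]_d, `|Rs a - Rs b| <= c * enorm (a - b)) ->
  MMD2 sigma a0 (particles Rs alpha sigma eps a0 L) <=
    2 * eps * L%:R / (sigma * Num.sqrt (expR 1)) *
    (c / alpha + 1 / (sigma * Num.sqrt (expR 1))).
Proof.
move=> _ N_gt0 eps_gt0 alpha_gt0 sigma_gt0 c_ge0 Rs_diff Rs_lip.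
have grad_le a : enorm (grad Rs a) <= c by exact: enorm_grad_le.
have phi_le (p : 'I_N -> 'rV[R]_d) z :
    enorm (phi Rs alpha sigma p z) <= c / alpha + gauss_lip sigma.
  exact: enorm_phi_le N_gt0 alpha_gt0 sigma_gt0 grad_le.
have disp_le := particles_displacement_le a0 (ltW eps_gt0) phi_le L.
apply: le_trans (MMD2_le_displacement N_gt0 sigma_gt0 disp_le) _.
by rewrite /gauss_lip le_eqVlt; apply/orP; left; apply/eqP; ring.
Qed.
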